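(* Suppose processes know neither $n$ nor any upper bound $D$ on the network causal diameter, i.e., the algorithm executed by a process depends only on its own identifier and not on $n$ or $D$. Then there is no deterministic algorithm that solves leader election in every run (for every number of processes $n\ge2$, every assignment of distinct identifiers, and every sequence of communication graphs satisfying Assumption 1 for some positive integer $D$).
   Context: Model: a finite set $\Pi$ of $n\ge2$ processes with distinct identifiers runs a deterministic algorithm in synchronous lock-step rounds $r=1,2,\dots$. An adversary fixes an infinite sequence of simple directed graphs $\mathcal{G}^1,\mathcal{G}^2,\dots$ on vertex set $\Pi$; $(p\to q)\in\mathcal{G}^r$ iff $q$ receives $p$'s round-$r$ message in round $r$. In round $r$ each process broadcasts a message determined by its current state (received exactly by its out-neighbours in $\mathcal{G}^r$), then computes its new state from its current state and the set of (sender, message) pairs received in round $r$. Leader election: eventually exactly one process irrevocably enters a special state ELECTED and every other process irrevocably enters the state NON-ELECTED (non-leaders need not know the leader's identifier). Causality: $p$ causally influences $q$ in round $t$ if $q=p$ or $(p\to q)\in\mathcal{G}^t$; a causal chain of length $k\ge1$ from $p$ in round $t$ to $q$ is a sequence $p=p_0,\dots,p_k=q$ with $p_i$ causally influencing $p_{i+1}$ in round $t+i$; $d_t(p,q)$ is the least such $k$ ($\infty$ if none). A root component of $\mathcal{G}^t$ is a strongly connected component $\mathcal{R}$ with no edge $(q\to p)$, $p\in\mathcal{R}$, $q\notin\mathcal{R}$. For an interval $I=[r,s]$, an $I$-vertex-stable root component is a set $\mathcal{R}\subseteq\Pi$ that is a root component of $\mathcal{G}^t$ for every $t\in I$. When each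 $\mathcal{G}^x$ has a unique root component $\mathcal{R}^x$, $D^x=\max\{d_x(p,q):p\in\mathcal{R}^x,q\in\Pi\}$ is the network causal diameter of round $x$, and for $I=[r,s]$, $D^I=\max\{D^x:x\in I,\ x+D^x-1\le s\}$ ($\infty$ if empty). An $I$-vertex-stable root component with $I=[r,s]$ is $D$-bounded if $D\ge D^I$ and $D^{s-D+1}\le D$. Assumption 1 (parameter $D$): every $\mathcal{G}^r$ has exactly one root component; every $I$-vertex-stable root component with $|I|\ge D$ is $D$-bounded; and there is an interval $J=[r_{ST},r_{ST}+d]$ with $d>4D$ such that there is a $D$-bounded $J$-vertex-stable root component. *)

From Stdlib Require Import ClassicalEpsilon.
From mathcomp Require Import all_boot.
Set Implicit Arguments. Unset Strict Implicit. Unset Printing Implicit Defensive.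

(* ---------- Algorithms ----------------------------------------------------
   A deterministic algorithm whose code depends only on the process's own
   identifier (a nat), never on n or D.  Received messages in a round are the
   set of (sender identifier, message) pairs, represented as a partial map
   from sender identifiers to messages (senders have distinct identifiers).
   out id s = Some true  : state s is ELECTED
   out id s = Some false : state s is NON-ELECTED
   out id s = None       : undecided. *)
Record algorithm := Algorithm {
  St : Type;
  Msg : Type;
  init : nat -> St;
  send : nat -> St -> Msg;
  trans : nat -> St -> (nat -> option Msg) -> St;
  out : nat -> St -> option bool
}.
Arguments init a _ : clear implicits.
Arguments send a _ _ : clear implicits.
Arguments trans a _ _ _ : clear implicits.
Arguments out a _ _ : clear implicits.

(* Communication graphs: G r is the (simple directed) graph of round r >= 1;
   (G r p q) means q receives p's round-r message. *)

Fixpoint state (A : algorithm) (n : nat) (ident : 'I_n -> nat)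
    (G : nat -> rel 'I_n) (r : nat) : 'I_n -> St A :=
  match r with
  | 0 => fun p => init A (ident p)
  | r'.+1 =>
      let prev := state A ident G r' in
      fun q => trans A (ident q) (prev q)
        (fun x => match [pick p | (ident p == x) && G r'.+1 p q] with
                  | Some p => Some (send A (ident p) (prev p))
                  | None => None
                  end)
  end.

Definition solves_run (A : algorithm) (n : nat) (ident : 'I_n -> nat)
    (G : nat -> rel 'I_n) : Prop :=
  let st := state A ident G in
  (forall (q : 'I_n) r b, out A (ident q) (st r q) = Some b ->
      forall r', r <= r' -> out A (ident q) (st r' q) = Some b) /\
  (exists p : 'I_n, forall q : 'I_n, exists r, out A (ident q) (st r q) = Some (q == p)).

Definition influences (n : nat) (G : nat -> rel 'I_n) (t : nat) (p q : 'I_n) : bool :=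
  (p == q) || G t p q.

Fixpoint chainb (n : nat) (G : nat -> rel 'I_n) (k t : nat) (p q : 'I_n) : bool :=
  match k with
  | 0 => p == q
  | k'.+1 => [exists p' : 'I_n, influences G t p p' && chainb G k' t.+1 p' q]
  end.

(* d_t(p,q): least k >= 1 with a causal chain of length k; None = infinity *)
Definition dist (n : nat) (G : nat -> rel 'I_n) (t : nat) (p q : 'I_n) : option nat :=
  match excluded_middle_informative (exists k, (0 < k) && chainb G k t p q) with
  | left h => Some (@ex_minn (fun k => (0 < k) && chainb G k t p q) h)
  | right _ => None
  end.

(* maximum on extended naturals (None = infinity) *)
Definition omax (a b : option nat) : option nat :=
  match a, b with Some x, Some y => Some (maxn x y) | _, _ => None end.

Definition is_rootb (n : nat) (G : nat -> rel 'I_n) (t : nat) (R : {set 'I_n}) : bool :=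
  [&& R != set0,
      [forall p in R, forall q in R, connect (G t) p q],
      [forall p in R, forall q, (connect (G t) p q && connect (G t) q p) ==> (q \in R)] &
      [forall p in R, forall q, (q \notin R) ==> ~~ G t q p]].

(* the root component R^t (unique under Assumption 1) *)
Definition rootcomp (n : nat) (G : nat -> rel 'I_n) (t : nat) : option {set 'I_n} :=
  [pick R : {set 'I_n} | is_rootb G t R].

Definition netdiam (n : nat) (G : nat -> rel 'I_n) (x : nat) : option nat :=
  match rootcomp G x with
  | Some R => \big[omax/Some 0]_(p in R) \big[omax/Some 0]_(q : 'I_n) dist G x p q
  | None => None
  end.

Definition intdiam (n : nat) (G : nat -> rel 'I_n) (r s : nat) : option nat :=
  let xs := [seq x <- iota r (s.+1 - r) |
               if netdiam G x is Some m then x + m - 1 <= s else false] in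
  if xs is [::] then None else Some (\max_(x <- xs) odflt 0 (netdiam G x)).

Definition vstable (n : nat) (G : nat -> rel 'I_n) (r s : nat) (R : {set 'I_n}) : Prop :=
  forall t, r <= t <= s -> is_rootb G t R.

Definition Dbounded (n : nat) (G : nat -> rel 'I_n) (D r s : nat) : Prop :=
  (if intdiam G r s is Some m then m <= D else False) /\
  (if netdiam G (s.+1 - D) is Some m then m <= D else False).

Definition Assumption1 (n : nat) (G : nat -> rel 'I_n) (D : nat) : Prop :=
  (forall t, 1 <= t -> exists! R : {set 'I_n}, is_rootb G t R) /\
  (forall r s (R : {set 'I_n}), 1 <= r -> r <= s -> D <= s.+1 - r ->
      vstable G r s R -> Dbounded G D r s) /\
  (exists rST d (R : {set 'I_n}), [/\ 1 <= rST, 4 * D < d,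
      vstable G rST (rST + d) R & Dbounded G D rST (rST + d)]).

(* Two processes with identifiers [e] and [e+1] that hear each other in every
   round must elect one of themselves, say by round [r_e]; let [R] bound [r_0]
   and [r_2].  In a large network whose root changes every round up to [R], some
   process [L] is elected.  A second large network can then be built in which,
   during the first [R] rounds, the root is a pair [e, e+1] hearing nobody else
   (so one of them is elected as when alone) while the causal past of [L] is
   unchanged (so [L] is elected too): two leaders.  All networks involved end
   with a fixed star and satisfy Assumption 1 with [D = R + 2], a [D] the
   algorithm cannot know. *)
From Stdlib Require Import ClassicalEpsilon FunctionalExtensionality.
From mathcomp Require Import all_boot zify.
Set Implicit Arguments. Unset Strict Implicit. Unset Printing Implicit Defensive.

(* [P k u] says that the in-neighbours of [u] in the first [k] rounds are
   mirrored by [f]; as [f] preserves identifiers, [u] and [f u] then receive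
   the same messages and stay in the same state. *)
Lemma state_simulation (A : algorithm) n1 n2 (id1 : 'I_n1 -> nat)
    (id2 : 'I_n2 -> nat) (G1 : nat -> rel 'I_n1) (G2 : nat -> rel 'I_n2)
    (f : 'I_n1 -> 'I_n2) (P : nat -> 'I_n1 -> Prop) :
  injective id1 -> (forall u, id2 (f u) = id1 u) ->
  (forall k u, P k.+1 u -> [/\ P k u,
     forall v, G1 k.+1 v u -> P k v /\ G2 k.+1 (f v) (f u) &
     forall w, G2 k.+1 w (f u) -> exists2 v, w = f v & G1 k.+1 v u]) ->
  forall k u, P k u -> state A id1 G1 k u = state A id2 G2 k (f u).
Proof.
move=> id1_inj id_f mirror; elim=> [|k IH] u Pu /=; first by rewrite id_f.
have [Pk u_in f_in] := mirror k u Pu.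
rewrite id_f IH //; congr (trans _ _ _ _).
apply: functional_extensionality => x.
case: pickP => [v /andP[/eqP idv G1v]|no_v].
  have [Pv G2v] := u_in v G1v.
  case: pickP => [w /andP[/eqP idw G2w]|no_w].
    have [v' w_v' G1v'] := f_in w G2w; subst w.
    have -> : v' = v by apply: id1_inj; rewrite -id_f idw idv.
    by rewrite IH // id_f.
  by move: (no_w (f v)); rewrite id_f idv eqxx G2v.
case: pickP => [w /andP[/eqP idw G2w]|//].
have [v' w_v' G1v'] := f_in w G2w; subst w.
by move: (no_v v'); rewrite -id_f idw eqxx G1v'.
Qed.

Lemma solves_run_elects (A : algorithm) n (id : 'I_n -> nat) G :
  solves_run A id G -> exists L r, out A (id L) (state A id G r L) = Some true.
Proof. by move=> [_ [L hL]]; have [r hr] := hL L; exists L, r; rewrite eqxx in hr. Qed.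

Lemma solves_run_elected_unique (A : algorithm) n (id : 'I_n -> nat) G u w r r' :
  solves_run A id G ->
  out A (id u) (state A id G r u) = Some true ->
  out A (id w) (state A id G r' w) = Some true -> u = w.
Proof.
move=> [irrevocable [L final]] hu hw.
have decided q r0 : out A (id q) (state A id G r0 q) = Some true -> q = L.
  move=> hq; have [r1 h1] := final q.
  have := irrevocable _ _ _ hq (maxn r0 r1) (leq_maxl _ _).
  rewrite (irrevocable _ _ _ h1 (maxn r0 r1) (leq_maxr _ _)).
  by case=> /eqP.
by rewrite (decided _ _ hu) (decided _ _ hw).
Qed.

Lemma connect_closed_in n (e : rel 'I_n) (S : {set 'I_n}) :
  (forall p q, p \in S -> q \notin S -> ~~ e q p) ->
  forall p q, p \in S -> connect e q p -> q \in S.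
Proof.
move=> closed p q pS /connectP [s pth ep]; rewrite ep in pS; clear ep.
elim: s q pth pS => [//|y s IH] q /= /andP[eqy pth] lS.
apply/negPn/negP => qS; by move: (closed _ _ (IH _ pth lS) qS); rewrite eqy.
Qed.

Lemma is_rootbP n (G : nat -> rel 'I_n) t S :
  reflect [/\ S != set0, (forall p q, p \in S -> q \in S -> connect (G t) p q),
     (forall p q, p \in S -> connect (G t) p q -> connect (G t) q p -> q \in S) &
     (forall p q, p \in S -> q \notin S -> ~~ G t q p)] (is_rootb G t S).
Proof.
apply: (iffP and4P) => [[h1 /forallP h2 /forallP h3 /forallP h4]|[h1 h2 h3 h4]].
  split=> // p q pS.
  - by move: (h2 p); rewrite pS => /forallP/(_ q) /implyP.
  - by move: (h3 p); rewrite pS => /forallP/(_ q) /implyP + c1 c2; apply; rewrite c1 c2.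
  - by move: (h4 p); rewrite pS => /forallP/(_ q) /implyP.
split=> //; apply/forallP => p; apply/implyP => pS; apply/forallP => q; apply/implyP.
- exact: h2.
- by case/andP; apply: h3.
- exact: h4.
Qed.

Lemma is_rootb_unique n (G : nat -> rel 'I_n) t S s T :
  is_rootb G t S -> s \in S -> (forall v, connect (G t) s v) ->
  is_rootb G t T -> T = S.
Proof.
move=> /is_rootbP[_ S_conn S_max _] sS reach /is_rootbP[T0 T_conn T_max T_closed].
have [y yT] := set0Pn _ T0.
have sT : s \in T by apply: (connect_closed_in T_closed yT (reach y)).
apply/setP => x; apply/idP/idP => hx.
- exact: S_max sS (T_conn _ _ sT hx) (T_conn _ _ hx sT).
- exact: T_max sT (reach x) (S_conn _ _ hx sS).
Qed.

Lemma is_rootb_pair n (G : nat -> rel 'I_n) t u v :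
  u != v -> G t u v -> G t v u ->
  (forall y, y != u -> y != v -> ~~ G t y u && ~~ G t y v) ->
  is_rootb G t [set u; v].
Proof.
move=> uv Guv Gvu no_in.
have closed p q : p \in [set u; v] -> q \notin [set u; v] -> ~~ G t q p.
  rewrite !inE => /orP[]/eqP -> /norP[qu qv]; by have /andP[] := no_in q qu qv.
apply/is_rootbP; split=> //.
- by apply/set0Pn; exists u; rewrite !inE eqxx.
- move=> p q; rewrite !inE => /orP[]/eqP -> /orP[]/eqP ->;
  by rewrite ?connect0 // connect1.
- by move=> p q pS _; apply: (connect_closed_in closed pS).
Qed.

Lemma dist_le_chain n (G : nat -> rel 'I_n) t p q k B :
  0 < k -> k <= B -> chainb G k t p q -> exists2 m, dist G t p q = Some m & m <= B.
Proof.
move=> k0 kB ch; rewrite /dist; case: excluded_middle_informative => [h|[]].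
  by case: ex_minnP => m _ min_m; exists m => //; apply/(leq_trans _ kB)/min_m; rewrite k0.
by exists k; rewrite k0.
Qed.

Lemma big_omax_le (I : Type) (r : seq I) (P : pred I) (F : I -> option nat) B :
  (forall i, P i -> exists2 m, F i = Some m & m <= B) ->
  exists2 m, \big[omax/Some 0]_(i <- r | P i) F i = Some m & m <= B.
Proof.
move=> hF; apply: (big_ind (fun o => exists2 m, o = Some m & m <= B)) => //.
  by exists 0.
by move=> x y [a -> ha] [b -> hb]; exists (maxn a b); rewrite // geq_max ha hb.
Qed.

Lemma eq_inord n (v : 'I_n.+1) k : k <= n -> (v == inord k) = (v == k :> nat).
Proof.
by move=> kn; apply/eqP/eqP => [->|vk]; [rewrite inordK | apply/ord_inj; rewrite inordK].
Qed.

Definition star (c d x y : nat) : bool :=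
  ((x == c) && (y != c)) || ((x == d) && (y == c)).

Section EventuallyStar.
Variables (N R c d : nat) (G : nat -> rel 'I_N) (X : nat -> {set 'I_N}).
Hypotheses (cN : c < N) (dN : d < N) (cd : c != d).
Hypothesis G_star : forall t, R < t -> forall u v, G t u v = star c d u v.
Hypothesis G_early : forall t, 0 < t <= R -> is_rootb G t (X t) /\
  exists s, [/\ s \in X t, s != c :> nat, s != d :> nat & forall v, connect (G t) s v].

Let oc := Ordinal cN.
Let od := Ordinal dN.
Let hub := [set oc; od].

Lemma neq_ord (v : 'I_N) k (kN : k < N) : (v != k :> nat) = (v != Ordinal kN).
Proof. by []. Qed.

Lemma star_centre_edge t v : R < t -> v != oc -> G t oc v.
Proof. by move=> Rt vc; rewrite G_star //= /star eqxx (neq_ord _ cN) vc. Qed.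

Lemma star_reach t v : R < t -> connect (G t) oc v.
Proof.
move=> Rt; case: (eqVneq v oc) => [->|vc]; first exact: connect0.
exact/connect1/star_centre_edge.
Qed.

Lemma star_root t : R < t -> is_rootb G t hub.
Proof.
move=> Rt; apply: is_rootb_pair; rewrite ?G_star // /star /=.
- by rewrite eqxx eq_sym cd.
- by rewrite !eqxx orbT.
move=> y; rewrite -!neq_ord => yc yd.
by rewrite !G_star // /star /= (negbTE yc) (negbTE yd).
Qed.

Lemma star_root_unique t T : R < t -> is_rootb G t T -> T = hub.
Proof.
move=> Rt; apply: (is_rootb_unique (star_root Rt)); last by move=> v; apply: star_reach.
by rewrite !inE eqxx.
Qed.

Lemma star_netdiam t : R < t -> exists2 m, netdiam G t = Some m & m <= 2.
Proof.
move=> Rt; rewrite /netdiam /rootcomp; case: pickP => [T rootT|no_root]; last first.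
  by move: (no_root hub); rewrite star_root.
rewrite (star_root_unique Rt rootT); apply: big_omax_le => p p_hub.
apply: big_omax_le => q _.
have oc_inf t' : R < t' -> influences G t' oc q.
  move=> Rt'; rewrite /influences; case: (eqVneq oc q) => //= ocq.
  by apply: star_centre_edge; rewrite // eq_sym.
move: p_hub; rewrite !inE => /orP[]/eqP ->.
  apply: (@dist_le_chain _ _ _ _ _ 1) => //=.
  by apply/existsP; exists q; rewrite eqxx andbT; apply: oc_inf.
apply: (@dist_le_chain _ _ _ _ _ 2) => //=; apply/existsP; exists oc.
rewrite /influences G_star //= /star !eqxx orbT orbT /=.
by apply/existsP; exists q; rewrite eqxx andbT; apply/oc_inf/ltnW.
Qed.

Lemma star_Dbounded r s : R < r -> R.+2 <= s.+1 - r -> Dbounded G R.+2 r s.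
Proof.
move=> Rr long; split.
  rewrite /intdiam; set xs := [seq x <- _ | _].
  have r_xs : r \in xs.
    rewrite mem_filter mem_iota leqnn /=.
    have [m -> hm] := star_netdiam Rr; apply/andP; split; lia.
  have : \max_(x <- xs) odflt 0 (netdiam G x) <= 2.
    rewrite big_seq; apply: (big_ind (fun m => m <= 2)) => // [a b ha hb|x].
      by rewrite geq_max ha hb.
    rewrite mem_filter mem_iota => /andP[_ /andP[rx _]].
    by have [m -> hm] := star_netdiam (leq_trans Rr rx).
  by case: xs r_xs => [//|x0 xs'] _; lia.
have [m -> hm] : exists2 m, netdiam G (s.+1 - R.+2) = Some m & m <= 2.
  by apply: star_netdiam; lia.
lia.
Qed.

(* Before round [R + 1] the root differs from the final root [{c, d}], so a
   vertex-stable root component spanning [D = R + 2] rounds lies entirely in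
   the star phase, where the causal diameter is at most 2. *)
Lemma Assumption1_eventually_star : Assumption1 G R.+2.
Proof.
split; [|split].
- move=> t t1; case: (leqP t R) => tR.
    have [rootX [s [sX _ _ reach]]] := G_early (t := t) ltac:(by rewrite t1 tR).
    by exists (X t); split=> // T rootT; rewrite (is_rootb_unique rootX sX reach rootT).
  by exists hub; split=> [|T rootT]; rewrite ?star_root // (star_root_unique tR rootT).
- move=> r s S r1 rs long stable; apply: star_Dbounded => //.
  rewrite ltnNge; apply/negP => rR.
  have [rootX [s0 [sX s0c s0d reach]]] := G_early (t := r) ltac:(by rewrite r1 rR).
  have := is_rootb_unique rootX sX reach (stable r ltac:(by rewrite leqnn rs)).
  have Rs : R < s by lia.
  have := star_root_unique Rs (stable s ltac:(by rewrite leqnn rs)).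
  move=> -> XS; rewrite (neq_ord _ cN) (neq_ord _ dN) in s0c s0d.
  by move: sX; rewrite -XS !inE (negbTE s0c) (negbTE s0d).
- exists R.+1, (4 * R.+2).+1, hub; split=> //.
  + by move=> t /andP[Rt _]; apply: star_root.
  + by apply: star_Dbounded => //; lia.
Qed.

End EventuallyStar.

Definition pair_graph : nat -> rel 'I_2 := fun _ u v => star 0 1 u v.

Definition pair_ident (e : nat) : 'I_2 -> nat := fun u => u + e.

Lemma pair_ident_inj e : injective (pair_ident e).
Proof. by move=> u v /addIn /val_inj. Qed.

Lemma pair_graph_irreflexive t : irreflexive (pair_graph t).
Proof. by move=> u; rewrite /pair_graph /star; lia. Qed.

Lemma Assumption1_pair_graph : Assumption1 pair_graph 2.
Proof.
by apply: (@Assumption1_eventually_star 2 0 0 1 _ (fun _ => set0)) => // t; lia.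
Qed.

Definition staged N R c d (early : nat -> nat -> nat -> bool) : nat -> rel 'I_N :=
  fun t u v => if 0 < t <= R then early t u v else star c d u v.
Arguments staged : clear implicits.

Lemma staged_late N R c d early t u v :
  R < t -> staged N R c d early t u v = star c d u v.
Proof. by rewrite /staged; case: ifP => //; lia. Qed.

Lemma staged_early N R c d early t u v :
  0 < t <= R -> staged N R c d early t u v = early t u v.
Proof. by rewrite /staged => ->. Qed.

(* Processes [0 .. 2R+5] of the large networks are identified with their
   identifiers, and both networks end with the star centred at [4].  In round
   [t <= R] of [pi_graph R] the root is the pair [a = 2t+4], [a+1]: [a] hears
   only [a+1] and broadcasts to everybody else.  In [beta_graph R e s] the root
   is the pair [e], [e+1] instead, which hears nobody else, and [e] feeds [a],
   which relays to the rest; only in round [s] does [e] feed [a+1], which feeds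
   [a] as in [pi_graph R].  A process is [undisturbed] through round [k] if it is
   not in the pair and no relay of rounds [1..k] whose input differs between
   the two networks. *)
Definition pi_edge t x y := star (t.*2 + 4) (t.*2 + 5) x y.

Definition beta_edge e s t x y :=
  let a := t.*2 + 4 in let r := if s == t then a.+1 else a in
  [|| (x == e) && (y == e.+1), (x == e.+1) && (y == e), (x == e) && (y == r),
      [&& s == t, x == a.+1 & y == a] |
      [&& x == a, y != e, y != e.+1, y != a & y != r]].

(* A notation, so that ['I_(net_size R)] has the shape ['I_n.+1] needed by [inord]. *)
Notation net_size R := (R.*2 + 5).+1.
Definition pi_graph R := staged (net_size R) R 4 5 pi_edge.
Definition beta_graph R e s := staged (net_size R) R 4 5 (beta_edge e s).
Arguments pi_graph : clear implicits.
Arguments beta_graph : clear implicits.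

Lemma pi_graph_irreflexive R t : irreflexive (pi_graph R t).
Proof. by move=> u; rewrite /pi_graph /staged /pi_edge /star; case: ifP; lia. Qed.

Lemma beta_graph_irreflexive R e s : e <= 2 -> forall t, irreflexive (beta_graph R e s t).
Proof.
move=> e2 t u; rewrite /beta_graph /staged /beta_edge /star.
by case: ifP => _; case: (s == t); lia.
Qed.

Lemma Assumption1_pi_graph R : Assumption1 (pi_graph R) R.+2.
Proof.
apply: (@Assumption1_eventually_star _ R 4 5 _
  (fun t => [set inord (t.*2 + 4); inord (t.*2 + 5)])) => //; try lia.
  by move=> t Rt u v; apply: staged_late.
move=> t /andP[t0 tR].
have edge u v : pi_graph R t u v = pi_edge t u v.
  by apply: staged_early; rewrite t0.
have [ta tb] : t.*2 + 4 <= R.*2 + 5 /\ t.*2 + 5 <= R.*2 + 5 by lia.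
split.
  apply: is_rootb_pair => [|||y]; rewrite ?eq_inord ?edge ?inordK // /pi_edge /star; lia.
exists (inord (t.*2 + 4)); rewrite !inE eqxx inordK //; split=> //; try lia.
move=> v; case: (eqVneq v (inord (t.*2 + 4))) => [->|]; first exact: connect0.
rewrite eq_inord // => va; apply: connect1; rewrite edge inordK // /pi_edge /star.
by move: va; lia.
Qed.

Lemma Assumption1_beta_graph R e s : e <= 2 -> Assumption1 (beta_graph R e s) R.+2.
Proof.
move=> e2.
apply: (@Assumption1_eventually_star _ R 4 5 _
  (fun _ => [set inord e; inord e.+1])) => //; try lia.
  by move=> t Rt u v; apply: staged_late.
move=> t /andP[t0 tR].
have edge u v : beta_graph R e s t u v = beta_edge e s t u v.
  by apply: staged_early; rewrite t0.
have [eR e1R aR bR] :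
    [/\ e <= R.*2 + 5, e.+1 <= R.*2 + 5, t.*2 + 4 <= R.*2 + 5 & t.*2 + 5 <= R.*2 + 5].
  by split; lia.
split.
  apply: is_rootb_pair => [|||y]; rewrite ?eq_inord ?edge ?inordK // /beta_edge;
    by case: (s == t); lia.
exists (inord e); rewrite !inE eqxx inordK //; split=> //; try lia.
have hop x y : x <= R.*2 + 5 -> y <= R.*2 + 5 -> beta_edge e s t x y ->
    connect (beta_graph R e s t) (inord x) (inord y).
  by move=> xR yR xy; apply: connect1; rewrite edge !inordK.
have e_a : connect (beta_graph R e s t) (inord e) (inord (t.*2 + 4)).
  rewrite /beta_edge in hop; case st: (s == t) in hop.
    apply: (connect_trans (hop e (t.*2 + 5) _ _ _)); try lia.
    by apply: hop => /=; lia.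
  by apply: hop => /=; lia.
move=> v; rewrite -(inord_val v); move: (v : nat) (ltn_ord v) => x xR.
have : x = e \/ x = t.*2 + 4 \/ beta_edge e s t e x \/ beta_edge e s t (t.*2 + 4) x.
  by rewrite /beta_edge; case: (s == t) => /=; lia.
case=> [->|[->|[ex|ax]]]; [exact: connect0 | exact: e_a | exact: hop eR xR ex |].
exact: connect_trans e_a (hop _ _ aR xR ax).
Qed.

Lemma pair_state_beta (A : algorithm) R e s k (u : 'I_2) : e <= 2 -> k <= R ->
  state A (pair_ident e) pair_graph k u =
  state A (@nat_of_ord _) (beta_graph R e s) k (inord (u + e)).
Proof.
move=> e2 kR.
apply: (@state_simulation A _ _ _ _ _ _ (fun u => inord (u + e)) (fun k _ => k <= R))
  => // [|v|{}k {}u {}kR].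
- exact: pair_ident_inj.
- by rewrite inordK //; move: (ltn_ord v); lia.
have k1 : 0 < k.+1 <= R by lia.
have inord_shift (v : 'I_2) : (inord (v + e) : 'I_(net_size R)) = v + e :> nat.
  by rewrite inordK //; move: (ltn_ord v); lia.
split=> [|v|w]; first lia; rewrite /pair_graph /beta_graph staged_early // !inord_shift.
  by move: (ltn_ord u) (ltn_ord v); rewrite /star /beta_edge; case: (s == k.+1) => /=; lia.
move=> wu; exists (inord (1 - u)); last first.
  by rewrite inordK /star; move: (ltn_ord u); lia.
apply: val_inj; rewrite /= inord_shift inordK; last by lia.
move: wu (ltn_ord u); rewrite /beta_edge; move: (w : nat) => x.
by case: (s == k.+1) => /=; lia.
Qed.

Definition undisturbed e s k y : Prop :=
  [/\ y != e, y != e.+1, forall t, 0 < t <= k -> t != s -> y != t.*2 + 4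
    & ~~ [&& 0 < s, s <= k & y == s.*2 + 5]].

Lemma undisturbed_pred e s k y : undisturbed e s k.+1 y -> undisturbed e s k y.
Proof.
case=> ye ye1 not_a not_b; split=> //; last lia.
by move=> t tk ts; apply: not_a => //; lia.
Qed.

Lemma undisturbed_exists y : exists e s, (e = 0 \/ e = 2) /\ forall k, undisturbed e s k y.
Proof.
exists (if y < 2 then 2 else 0), (if odd y || (y < 6) then 0 else y./2 - 2).
have y_halves := odd_double_half y.
split=> [|k]; first by case: ifP; [right|left].
case: (ltnP y 2) => y2; case: (boolP (odd y || (y < 6))) => /= y_odd;
  split=> [||t tk ts|]; lia.
Qed.

Lemma undisturbed_in_edge e s k x y : e <= 2 -> undisturbed e s k.+1 y ->
  (pi_edge k.+1 x y -> undisturbed e s k x) /\ pi_edge k.+1 x y = beta_edge e s k.+1 x y.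
Proof.
move=> e2 [ye ye1 not_a]; move: (not_a k.+1).
rewrite /pi_edge /beta_edge /star; case: (eqVneq s k.+1) => [->|sk] /= a_ok not_b;
  by split=> [xy|]; [split=> [||t tk|] |]; lia.
Qed.

Lemma pi_state_beta (A : algorithm) R e s k (w : 'I_(net_size R)) :
  e <= 2 -> undisturbed e s k w ->
  state A (@nat_of_ord _) (pi_graph R) k w =
  state A (@nat_of_ord _) (beta_graph R e s) k w.
Proof.
move=> e2.
apply: (@state_simulation A _ _ _ _ _ _ id (fun k u => undisturbed e s k u)) => //.
  exact: ord_inj.
move=> {}k u und; split; first exact: undisturbed_pred.
- move=> v; rewrite /pi_graph /beta_graph.
  case: (leqP k.+1 R) => kR; last first.
    rewrite !staged_late // /star => vu; split=> //; split=> [||t tk ts|]; lia.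
  have [v_und v_edge] := undisturbed_in_edge v e2 und.
  by rewrite !staged_early ?kR // => vu; split; [exact: v_und | rewrite -v_edge].
- move=> v; rewrite /pi_graph /beta_graph => vu; exists v => //.
  case: (leqP k.+1 R) => kR; last by move: vu; rewrite !staged_late.
  have [_ v_edge] := undisturbed_in_edge v e2 und.
  by move: vu; rewrite !staged_early ?kR // v_edge.
Qed.

Lemma beta_graph_two_leaders (A : algorithm) R e s (L' : 'I_2) r' (L : 'I_(net_size R)) r :
  e <= 2 -> r' <= R -> undisturbed e s r L ->
  out A (pair_ident e L') (state A (pair_ident e) pair_graph r' L') = Some true ->
  out A L (state A (@nat_of_ord _) (pi_graph R) r L) = Some true ->
  ~ solves_run A (@nat_of_ord _) (beta_graph R e s).
Proof.
move=> e2 r'R und pair_elects pi_elects solves.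
have L'_in_beta : out A (inord (L' + e) : 'I_(net_size R))
    (state A (@nat_of_ord _) (beta_graph R e s) r' (inord (L' + e))) = Some true.
  by rewrite -pair_state_beta // inordK //; move: (ltn_ord L'); lia.
rewrite (pi_state_beta A e2 und) in pi_elects.
have := solves_run_elected_unique solves L'_in_beta pi_elects.
move=> /(congr1 (@nat_of_ord _)); case: und => ye ye1 _ _.
by rewrite inordK; move: (ltn_ord L'); lia.
Qed.

Theorem theorem4 :
  forall A : algorithm,
    ~ (forall (n : nat), 2 <= n ->
       forall ident : 'I_n -> nat, injective ident ->
       forall G : nat -> rel 'I_n, (forall t, irreflexive (G t)) ->
       forall D : nat, 0 < D -> Assumption1 G D ->
       solves_run A ident G).
Proof.
move=> A solves.
have pair_elects e := solves_run_elects (solves 2 isT (pair_ident e) (@pair_ident_inj e)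
  pair_graph pair_graph_irreflexive 2 isT Assumption1_pair_graph).
have [L0 [r0 elected0]] := pair_elects 0; have [L2 [r2 elected2]] := pair_elects 2.
pose R := maxn r0 r2.
have solves_big (G : nat -> rel 'I_(net_size R)) :
    (forall t, irreflexive (G t)) -> Assumption1 G R.+2 -> solves_run A (@nat_of_ord _) G.
  have big : 2 <= net_size R by lia.
  by move=> G_irr; apply: (solves _ big _ (@ord_inj _) G G_irr R.+2).
have [L [r pi_elected]] :=
  solves_run_elects (solves_big _ (@pi_graph_irreflexive R) (Assumption1_pi_graph R)).
have [e [s [e02 und]]] := undisturbed_exists L.
have e2 : e <= 2 by case: e02 => ->.
have [L' [r' [r'R pair_elected]]] : exists L' r', r' <= R /\
    out A (pair_ident e L') (state A (pair_ident e) pair_graph r' L') = Some true.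
  by case: e02 => ->; [exists L0, r0 | exists L2, r2]; rewrite ?leq_maxl ?leq_maxr.
apply: (beta_graph_two_leaders e2 r'R (und r) pair_elected pi_elected).
exact: solves_big (@beta_graph_irreflexive R e s e2) (Assumption1_beta_graph R s e2).
Qed.
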